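(* Let $m\ge1$ and let $\mathcal{G}=\mathbb{Z}/2^m\mathbb{Z}$ (additive group). Let $e_1,\dots,e_t$ be a sequence of $t$ nonzero elements of $\mathcal{G}$ (repetitions allowed), and let \[ \mathcal{S}=\Big\{\sum_{j=1}^t\delta_je_j:\ \delta_j\in\{-1,0,1\}\Big\}\subseteq\mathcal{G}. \] (i) If $t\ge 2^{m-1}$, then $\overline{2^{m-1}}\in\mathcal{S}$. (ii) If $t=2^{m-1}-1$, then $\overline{2^{m-1}}\notin\mathcal{S}$ if and only if there exists $e\in(\mathbb{Z}/2^m\mathbb{Z})^*$ such that for each $j$, $e_j\equiv e$ or $e_j\equiv -e\pmod{2^m}$.
   Context: $\overline{i}$ denotes the residue class of $i$ modulo $2^m$. *)

From mathcomp Require Import all_boot all_order all_algebra.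
Set Implicit Arguments. Unset Strict Implicit. Unset Printing Implicit Defensive.
Import GRing.Theory.
Local Open Scope ring_scope.

Definition in_signed_sums (m t : nat) (e : 'I_t -> 'Z_(2 ^ m)) (x : 'Z_(2 ^ m)) : Prop :=
  exists d : 'I_t -> int,
    (forall j, d j \in [:: (-1)%R; 0%R; 1%R]) /\ x = \sum_(j < t) e j *~ d j.

From mathcomp Require Import all_boot all_order all_algebra zify ring.
Import Order.TTheory GRing.Theory Num.Theory.
Set Implicit Arguments. Unset Strict Implicit. Unset Printing Implicit Defensive.
Local Open Scope ring_scope.

(* Work with integer representatives in [0, 2^(m+1)).  If no element of a list s
   is divisible by 2^(m+2), pair its odd elements a, b into (a + b)/2 or (a - b)/2
   and halve its even elements: the new list H has no element divisible by
   2^(m+1), has floor(#odd/2) + #even elements, and twice a signed sum of H is a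
   signed sum of s, so that 2^m = (signed sum of H) mod 2^(m+1) lifts to
   2^(m+1) = (signed sum of s) mod 2^(m+2).  As (a + b)/2 and (a - b)/2 differ by
   the odd number b, the parity of each paired element can be chosen.
   By induction, 2^m is a signed sum of s modulo 2^(m+1) as soon as s has 2^m
   elements, or 2^m - 1 elements one of which is even, or 2^m - 1 elements two
   of which are odd with a <> +-b (then pair them into an even element).  In the
   remaining case every element is +-u for an odd u, a signed sum is k u with
   |k| <= |s| < 2^m, and k u = 2^m would force 2^m | k, i.e. k = 0. *)

Definition signs : seq int := [:: -1; 0; 1].

Lemma signsN (d : int) : d \in signs -> - d \in signs.
Proof. by rewrite !inE => /or3P[]/eqP->. Qed.

Lemma norm_signs (d : int) : d \in signs -> `|d| <= 1.
Proof. by rewrite !inE => /or3P[]/eqP->. Qed.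

Inductive signed_sum : seq int -> int -> Prop :=
| signed_sum_nil : signed_sum [::] 0
| signed_sum_cons (a : int) (s : seq int) (d y : int) :
    d \in signs -> signed_sum s y -> signed_sum (a :: s) (d * a + y).

Lemma signed_sum_nilP y : signed_sum [::] y -> y = 0.
Proof. by move=> h; inversion h. Qed.

Lemma signed_sum_consP a s y : signed_sum (a :: s) y ->
  exists d y', [/\ d \in signs, y = d * a + y' & signed_sum s y'].
Proof. by move=> h; inversion h; exists d, y0. Qed.

Lemma signed_sum0 s : signed_sum s 0.
Proof.
elim: s => [|a s IH]; first exact: signed_sum_nil.
by have := @signed_sum_cons a s 0 0 isT IH; rewrite mul0r addr0.
Qed.

Lemma signed_sum_cat s1 s2 y1 y2 :
  signed_sum s1 y1 -> signed_sum s2 y2 -> signed_sum (s1 ++ s2) (y1 + y2).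
Proof.
elim=> [|a s d y hd _ IH] s2y2 /=; first by rewrite add0r.
by rewrite -addrA; apply: signed_sum_cons => //; apply: IH.
Qed.

Lemma signed_sum_catP s1 s2 y : signed_sum (s1 ++ s2) y ->
  exists y1 y2, [/\ y = y1 + y2, signed_sum s1 y1 & signed_sum s2 y2].
Proof.
elim: s1 y => [|a s1 IH] y /=.
  by exists 0, y; rewrite add0r; split=> //; apply: signed_sum_nil.
case/signed_sum_consP=> d [y' [hd -> /IH [y1 [y2 [-> s1y1 s2y2]]]]].
exists (d * a + y1), y2; rewrite addrA; split=> //.
exact: signed_sum_cons.
Qed.

Lemma signed_sum_rem a s d y : a \in s -> d \in signs ->
  signed_sum (rem a s) y -> signed_sum s (d * a + y).
Proof.
elim: s y => [|x s IH] y //=; rewrite inE eq_sym.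
have [<- _ hd|_ /= sa hd] := eqVneq x a; first exact: signed_sum_cons.
case/signed_sum_consP=> d' [y' [hd' -> sy']].
rewrite addrCA; apply: signed_sum_cons => //; exact: IH.
Qed.

Lemma signed_sum_perm s s' y : perm_eq s s' -> signed_sum s y -> signed_sum s' y.
Proof.
elim: s s' y => [|a s IH] s' y.
  by move/perm_size; case: s'.
move=> pss' /signed_sum_consP [d [y' [hd -> sy']]].
have s'a : a \in s' by rewrite -(perm_mem pss') mem_head.
apply: signed_sum_rem => //; apply: IH sy'.
by rewrite -(perm_cons a) (perm_trans pss') // perm_to_rem.
Qed.

Lemma signed_sum_scale c s y :
  signed_sum s y -> signed_sum [seq c * a | a <- s] (c * y).
Proof.
elim=> [|a s' d y' hd _ IH] /=; first by rewrite mulr0; apply: signed_sum_nil.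
by rewrite mulrDr mulrCA; apply: signed_sum_cons.
Qed.

Lemma signed_sum_big (I : eqType) (r : seq I) (f : I -> int) y : uniq r ->
  signed_sum [seq f i | i <- r] y <->
  exists d : I -> int, (forall i, d i \in signs) /\ y = \sum_(i <- r) d i * f i.
Proof.
move=> ur; split.
  elim: r ur y => [|i r IH] /= ur y.
    by move/signed_sum_nilP->; exists (fun=> 0); rewrite big_nil.
  case/andP: ur => ir ur /signed_sum_consP [di [y' [hdi -> /(IH ur) [d [hd ->]]]]].
  exists (fun j => if j == i then di else d j); split=> [j|]; first by case: eqP.
  rewrite big_cons eqxx; congr (_ + _); apply: eq_big_seq => j jr.
  by case: eqP => // ji; rewrite -ji jr in ir.
case=> d [hd ->]; elim: r {ur} => [|i r IH] /=.
  by rewrite big_nil; apply: signed_sum_nil.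
by rewrite big_cons; apply: signed_sum_cons.
Qed.

Definition halves (H s : seq int) := forall y, signed_sum H y -> signed_sum s (2 * y).

Lemma halves_nil s : halves [::] s.
Proof. by move=> y /signed_sum_nilP ->; rewrite mulr0; apply: signed_sum0. Qed.

Lemma halves_pair a b h H s : 2 * h = a + b \/ 2 * h = a - b ->
  halves H s -> halves (h :: H) (a :: b :: s).
Proof.
move=> hab hHs _ /signed_sum_consP [d [y [hd -> /hHs s2y]]].
rewrite mulrDr mulrCA; case: hab => ->; rewrite mulrDr ?mulrN -?mulNr -addrA.
  by apply: signed_sum_cons => //; apply: signed_sum_cons.
by apply: signed_sum_cons => //; apply: signed_sum_cons => //; apply: signsN.
Qed.

Lemma halves_cat H1 H2 s1 s2 :
  halves H1 s1 -> halves H2 s2 -> halves (H1 ++ H2) (s1 ++ s2).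
Proof.
move=> h1 h2 _ /signed_sum_catP [y1 [y2 [-> /h1 s1y1 /h2 s2y2]]].
by rewrite mulrDr; apply: signed_sum_cat.
Qed.

Lemma halves_perm H s s' : perm_eq s s' -> halves H s -> halves H s'.
Proof. by move=> pss' hHs y /hHs; apply: signed_sum_perm. Qed.

Lemma half_sum_or_diff (a b : int) (p : bool) : ~~ (2 %| a)%Z -> ~~ (2 %| b)%Z ->
  exists2 h, 2 * h = a + b \/ 2 * h = a - b & (2 %| h)%Z = p.
Proof.
move=> oa ob; have [hp|hp] := boolP ((2 %| (a + b) %/ 2)%Z == p).
  by exists ((a + b) %/ 2)%Z; [left; lia | exact: (eqP hp)].
by exists ((a - b) %/ 2)%Z; [right; lia | move: hp; case: p; lia].
Qed.

Lemma halving_odd O : {in O, forall a, ~~ (2 %| a)%Z} ->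
  exists2 H, {in H, forall h, ~~ (2 %| h)%Z} & size H = (size O)./2 /\ halves H O.
Proof.
have [n] := ubnP (size O); elim: n O => // n IH [|a [|b O]] /= ltOn oddO.
1,2: by exists [::] => [x|]; rewrite ?in_nil //; split=> //; apply: halves_nil.
have oddb : ~~ (2 %| b)%Z by apply: oddO; rewrite !inE eqxx orbT.
have [h hab oh] := half_sum_or_diff false (oddO a (mem_head _ _)) oddb.
have oddO' : {in O, forall x, ~~ (2 %| x)%Z}.
  by move=> x xO; apply: oddO; rewrite !inE xO !orbT.
have [H oddH [sH hHO]] := IH O (ltnW ltOn) oddO'.
exists (h :: H); last by split; [rewrite /= sH | apply: halves_pair].
by move=> x; rewrite inE => /predU1P [->|/oddH //]; rewrite oh.
Qed.

Lemma halving_even m E : {in E, forall a, (2 %| a)%Z && ~~ (2 ^+ m.+2 %| a)%Z} ->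
  exists2 H, {in H, forall h, ~~ (2 ^+ m.+1 %| h)%Z} & size H = size E /\ halves H E.
Proof.
move=> evE; exists [seq (a %/ 2)%Z | a <- E]; last split.
- move=> _ /mapP [a /evE /andP [ea na] ->].
  by rewrite -(dvdz_mul2l (isT : 2 != 0 :> int)) -exprS mulrC divzK.
- by rewrite size_map.
- have dblE : [seq 2 * h | h <- [seq (a %/ 2)%Z | a <- E]] = E.
    rewrite -map_comp -[RHS]map_id; apply/eq_in_map => a /evE /andP [ea _].
    by rewrite /= mulrC divzK.
  by rewrite -{2}dblE => y /(signed_sum_scale 2).
Qed.

Lemma halving m s : {in s, forall a, ~~ (2 ^+ m.+2 %| a)%Z} ->
  exists2 H, {in H, forall h, ~~ (2 ^+ m.+1 %| h)%Z} &
    size H = ((count (predC (dvdz 2)) s)./2 + count (dvdz 2) s)%N /\ halves H s.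
Proof.
move=> nds.
have [|HO oddHO [sHO hO]] := halving_odd (O := filter (predC (dvdz 2)) s).
  by move=> a; rewrite mem_filter => /andP [].
have [|HE ndHE [sHE hE]] := halving_even (m := m) (E := filter (dvdz 2) s).
  by move=> a; rewrite mem_filter => /andP [ea /nds nda]; apply/andP.
exists (HO ++ HE); last split.
- move=> h; rewrite mem_cat => /orP [/oddHO|/ndHE //].
  by apply: contra; apply: dvdz_trans; rewrite exprS dvdz_mulr.
- by rewrite size_cat sHO sHE !size_filter.
- by apply: halves_perm (halves_cat hO hE); rewrite perm_catC perm_filterC.
Qed.

Definition half_reachable m s :=
  exists2 y, signed_sum s y & (2 ^+ m.+1 %| y - 2 ^+ m)%Z.

Lemma half_reachable_halves m H s :
  halves H s -> half_reachable m H -> half_reachable m.+1 s.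
Proof.
move=> hHs [y /hHs s2y dy]; exists (2 * y) => //.
by rewrite [2 ^+ m.+1]exprS -mulrBr exprS dvdz_mul2l.
Qed.

Lemma half_reachable_perm m s s' :
  perm_eq s s' -> half_reachable m s -> half_reachable m s'.
Proof. by move=> pss' [y /(signed_sum_perm pss') s'y dy]; exists y. Qed.

Lemma half_reachable_size m s : {in s, forall a, ~~ (2 ^+ m.+1 %| a)%Z} ->
  (2 ^ m <= size s)%N -> half_reachable m s.
Proof.
elim: m s => [|m IH] s nds.
  case: s nds => [|a s] // nds _; exists (1 * a + 0).
    by apply: signed_sum_cons => //; apply: signed_sum0.
  by move: (nds a (mem_head _ _)); rewrite expr1 expr0; lia.
have [H ndH [sH hHs]] := halving nds; move=> le_s.
apply: half_reachable_halves hHs _; apply: IH => //.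
by rewrite sH; move: le_s; rewrite -(count_predC (dvdz 2) s) expnS; lia.
Qed.

Lemma half_reachable_even m s : {in s, forall a, ~~ (2 ^+ m.+1 %| a)%Z} ->
  ((2 ^ m).-1 <= size s)%N -> has (dvdz 2) s -> half_reachable m s.
Proof.
case: m => [|m] nds le_s /hasP [a sa ea].
  by move: (nds a sa); rewrite expr1; lia.
have [H ndH [sH hHs]] := halving nds.
apply: half_reachable_halves hHs _; apply: half_reachable_size => //.
have : (0 < count (dvdz 2) s)%N by rewrite -has_count; apply/hasP; exists a.
by rewrite sH; move: le_s; rewrite -(count_predC (dvdz 2) s) expnS; lia.
Qed.

Definition pm_mod (N a b : int) := (N %| a - b)%Z || (N %| a + b)%Z.

Lemma half_reachable_pair m a b s :
  {in [:: a, b & s], forall x, ~~ (2 ^+ m.+1 %| x)%Z} ->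
  ((2 ^ m).-1 <= (size s).+2)%N -> ~~ (2 %| a)%Z -> ~~ (2 %| b)%Z ->
  ~~ pm_mod (2 ^+ m.+1) a b -> half_reachable m [:: a, b & s].
Proof.
case: m => [|m] nds le_s oa ob; first by rewrite /pm_mod expr1; lia.
case/norP=> ndB ndD.
have [h hab eh] := half_sum_or_diff true oa ob.
have [|H ndH [sH hHs]] := halving (m := m) (s := s).
  by move=> x sx; apply: nds; rewrite !inE sx !orbT.
apply: half_reachable_halves (halves_pair hab hHs) _.
apply: half_reachable_even; last by apply/hasP; exists h; [exact: mem_head | exact: eh].
- move=> x; rewrite inE => /predU1P [->|/ndH //].
  rewrite -(dvdz_mul2l (isT : 2 != 0 :> int)) -exprS.
  by case: hab => ->.
- by rewrite /= sH; move: le_s; rewrite -(count_predC (dvdz 2) s) expnS; lia.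
Qed.

Lemma signed_sum_pm N u s y : {in s, forall a, pm_mod N a u} -> signed_sum s y ->
  exists2 k : int, `|k| <= (size s)%:Z & (N %| y - k * u)%Z.
Proof.
move=> pms sy; elim: sy pms => [|a s' d y' hd _ IH] pms.
  by exists 0; rewrite ?normr0 // mul0r subr0 dvdz0.
have [|k le_k dk] := IH; first by move=> x sx; apply: pms; rewrite inE sx orbT.
have d_le1 := norm_signs hd.
case/orP: (pms a (mem_head _ _)) => dau; [exists (d + k) | exists (k - d)].
- by rewrite (le_trans (ler_normD _ _)) // /= -addn1 PoszD addrC lerD.
- have -> : d * a + y' - (d + k) * u = d * (a - u) + (y' - k * u) by ring.
  by rewrite rpredD // dvdz_mull.
- by rewrite (le_trans (ler_normB _ _)) // /= -addn1 PoszD lerD.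
- have -> : d * a + y' - (k - d) * u = d * (a + u) + (y' - k * u) by ring.
  by rewrite rpredD // dvdz_mull.
Qed.

Lemma dvdz_small (d k : int) : (d %| k)%Z -> `|k| < `|d| -> k = 0.
Proof.
have [//|nz_k] := eqVneq k 0.
by move=> dk; have := dvdn_leq _ dk; rewrite absz_gt0 nz_k => /(_ isT); lia.
Qed.

Lemma not_half_reachable_pm m u s : ~~ (2 %| u)%Z ->
  {in s, forall a, pm_mod (2 ^+ m.+1) a u} -> (size s < 2 ^ m)%N ->
  ~ half_reachable m s.
Proof.
move=> ou pms lt_s [y /(signed_sum_pm pms) [k le_k dk] dy].
have dku : (2 ^+ m.+1 %| k * u - 2 ^+ m)%Z.
  by have := rpredB dy dk; rewrite opprB addrC addrA subrK addrC.
have cop : coprimez (2 ^+ m) u.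
  by apply: coprimezXl; rewrite coprimezE coprime2n; move: ou; lia.
have pow_gt0 : 0 < 2 ^+ m :> int by rewrite exprn_gt0.
have lt_k : `|k| < `|2 ^+ m| :> int.
  by rewrite [`|_ ^+ _|]gtr0_norm // (le_lt_trans le_k) // -natrX natz ltz_nat.
have k0 : k = 0.
  apply: dvdz_small lt_k; rewrite -(Gauss_dvdzl _ cop) -[k * u](subrK (2 ^+ m)).
  by rewrite rpredD // (dvdz_trans _ dku) // dvdz_exp2l.
move: dku; rewrite k0 mul0r sub0r => /dvdz_small; rewrite normrN exprS.
by rewrite !gtr0_norm ?mulr_gt0 //; lia.
Qed.

Lemma not_half_reachable_odd_pm m s : {in s, forall a, ~~ (2 ^+ m.+1 %| a)%Z} ->
  ((2 ^ m).-1 <= size s)%N -> ~ half_reachable m s ->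
  {in s, forall a, ~~ (2 %| a)%Z} /\ {in s &, forall a b, pm_mod (2 ^+ m.+1) a b}.
Proof.
move=> nds le_s unreach.
have odd_s : {in s, forall a, ~~ (2 %| a)%Z}.
  move=> a sa; apply/negP => ea; apply: unreach.
  by apply: half_reachable_even => //; apply/hasP; exists a.
split=> // a b sa sb; have [<-|nba] := eqVneq b a.
  by rewrite /pm_mod subrr dvdz0.
apply/negPn/negP => npm; apply: unreach.
have sb' : b \in rem a s by rewrite rem_mem.
have pss : perm_eq [:: a, b & rem b (rem a s)] s.
  by rewrite perm_sym (perm_trans (perm_to_rem sa)) // perm_cons perm_to_rem.
apply: (half_reachable_perm pss).
apply: (half_reachable_pair _ _ (odd_s a sa) (odd_s b sb)) => //.
- by move=> x; rewrite (perm_mem pss); apply: nds.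
- have : (0 < size (rem a s))%N by case: (rem a s) sb'.
  by move: le_s (size_rem sa) (size_rem sb'); lia.
Qed.

Section IntegerRepresentatives.

Variable N : nat.

Lemma intr_val_Zp (x : 'Z_N) : ((x : nat)%:Z)%:~R = x.
Proof. by rewrite -pmulrn natr_Zp. Qed.

Hypothesis N_gt1 : (1 < N)%N.

Lemma intr_Zp_eq0 (y : int) : ((y%:~R : 'Z_N) == 0) = (N%:Z %| y)%Z.
Proof.
case: y => n; first by rewrite -pmulrn -val_eqE /= val_Zp_nat.
by rewrite NegzE mulrNz oppr_eq0 -pmulrn -val_eqE /= val_Zp_nat // dvdzN.
Qed.

Lemma intr_Zp_eq (x y : int) : ((x%:~R : 'Z_N) == y%:~R) = (N%:Z %| x - y)%Z.
Proof. by rewrite -intr_Zp_eq0 intrB subr_eq0. Qed.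

End IntegerRepresentatives.

Lemma pow2z m : (2 ^ m)%:Z = 2 ^+ m :> int.
Proof. by rewrite -natz natrX. Qed.

Lemma pow2S_gt1 m : (1 < 2 ^ m.+1)%N.
Proof. by rewrite -[1%N](expn0 2) ltn_exp2l. Qed.

Definition residues t N (e : 'I_t -> 'Z_N) : seq int :=
  [seq (e j : nat)%:Z | j <- index_enum 'I_t].

Lemma size_residues t N (e : 'I_t -> 'Z_N) : size (residues e) = t.
Proof. by rewrite size_map [index_enum _]unlock -enumT size_enum_ord. Qed.

Lemma in_signed_sums_residues m t (e : 'I_t -> 'Z_(2 ^ m)) x :
  in_signed_sums e x <-> exists2 y, signed_sum (residues e) y & y%:~R = x.
Proof.
have sumE d : \sum_(j < t) e j *~ d j = (\sum_(j < t) d j * (e j : nat)%:Z)%:~R.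
  by rewrite mulrz_sumr; apply: eq_bigr => j _; rewrite intrM intr_val_Zp mulrC mulrzr.
split=> [[d [hd ->]]|[y]].
  exists (\sum_(j < t) d j * (e j : nat)%:Z); last by rewrite sumE.
  by apply/signed_sum_big; [exact: index_enum_uniq | exists d].
case/signed_sum_big => [|d [hd ->] <-]; first exact: index_enum_uniq.
by exists d; rewrite sumE.
Qed.

Lemma in_signed_sums_half m t (e : 'I_t -> 'Z_(2 ^ m.+1)) :
  in_signed_sums e (2 ^ m)%:R <-> half_reachable m (residues e).
Proof.
have eq_half y : (y%:~R == (2 ^ m)%:R :> 'Z_(2 ^ m.+1)) = (2 ^+ m.+1 %| y - 2 ^+ m)%Z.
  by rewrite pmulrn intr_Zp_eq ?pow2S_gt1 // !pow2z.
rewrite in_signed_sums_residues; split=> [[y sy /eqP ey]|[y sy dy]]; exists y => //.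
  by rewrite -eq_half.
by apply/eqP; rewrite eq_half.
Qed.

Lemma unit_Zp_pow2 m (x : 'Z_(2 ^ m.+1)) :
  (x \is a GRing.unit) = ~~ (2 %| (x : nat)%:Z)%Z.
Proof.
rewrite -[x in LHS]natr_Zp unitZpE ?pow2S_gt1 // coprime_pexpl // coprime2n.
by lia.
Qed.

Lemma pm_mod_Zp_pow2 m (x u : 'Z_(2 ^ m.+1)) :
  pm_mod (2 ^+ m.+1) (x : nat)%:Z (u : nat)%:Z = (x == u) || (x == - u).
Proof.
rewrite /pm_mod -pow2z -!intr_Zp_eq0 ?pow2S_gt1 //.
by rewrite intrB intrD !intr_val_Zp subr_eq0 addr_eq0.
Qed.

Theorem lemma2p4 (m t : nat) (hm : (1 <= m)%N) (e : 'I_t -> 'Z_(2 ^ m))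
    (he : forall j, e j != 0) :
  ((2 ^ m.-1 <= t)%N -> in_signed_sums e (2 ^ m.-1)%:R) /\
  (t = (2 ^ m.-1).-1 ->
     (~ in_signed_sums e (2 ^ m.-1)%:R <->
      exists2 u : 'Z_(2 ^ m), u \is a GRing.unit &
        forall j, e j = u \/ e j = - u)).
Proof.
case: m hm e he => // m _ e he /=.
have res_e j : (e j : nat)%:Z \in residues e by apply: map_f; apply: mem_index_enum.
have nz_res : {in residues e, forall a, ~~ (2 ^+ m.+1 %| a)%Z}.
  by move=> _ /mapP [j _ ->]; rewrite -pow2z -intr_Zp_eq0 ?pow2S_gt1 // intr_val_Zp.
split=> [le_t|t_eq].
  by apply/in_signed_sums_half/half_reachable_size; rewrite ?size_residues.
have le_res : ((2 ^ m).-1 <= size (residues e))%N by rewrite size_residues t_eq.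
split=> [/in_signed_sums_half unreach|[u unit_u pm_e] /in_signed_sums_half].
  have [odd_res pm_res] := not_half_reachable_odd_pm nz_res le_res unreach.
  have [j0 _|no_j] := pickP (predT : pred 'I_t); last first.
    by exists 1 => [|j]; [exact: unitr1 | have := no_j j].
  exists (e j0) => [|j]; first by rewrite unit_Zp_pow2 odd_res.
  have := pm_res _ _ (res_e j) (res_e j0).
  by rewrite pm_mod_Zp_pow2 => /orP [] /eqP; auto.
apply: (not_half_reachable_pm (u := (u : nat)%:Z)); first by rewrite -unit_Zp_pow2.
  move=> _ /mapP [j _ ->]; rewrite pm_mod_Zp_pow2.
  by case: (pm_e j) => ->; rewrite eqxx ?orbT.
by rewrite size_residues t_eq ltn_predL expn_gt0.
Qed.
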